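(* Let $C>0$ and $\delta>0$, let $f \in C((0,\infty);(0,\infty))$ be asymptotically increasing with $\lim_{x\to\infty} f(x)/x = \infty$, and let $\psi \in C([-\delta,0];(0,\infty))$. Consider \[ z'(t) = C\int_{t-\delta}^t f(z(s))\,ds, \quad t\ge 0; \qquad z(t)=\psi(t), \quad t\in[-\delta,0]. \] If the solution satisfies $z \in C([-\delta,\infty);(0,\infty))$ and $\bar F(x) = \int_0^x f(s)\,ds$ for $x>0$, then \[ \lim_{t\to\infty} \frac{\bar F(z(t-\delta))}{\bar F(z(t))} = 0. \]
   Context: ''$f$ is asymptotically increasing'' means that there is a continuous increasing function $\phi:(0,\infty)\to(0,\infty)$ with $f(x)/\phi(x)\to 1$ as $x\to\infty$. *)

From Stdlib Require Import Reals.
From Coquelicot Require Import Coquelicot.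
Open Scope R_scope.

Definition asymptotically_increasing (f : R -> R) : Prop :=
  exists phi : R -> R,
    (forall x, 0 < x -> continuous phi x) /\
    (forall x, 0 < x -> 0 < phi x) /\
    (forall x y, 0 < x -> x < y -> phi x < phi y) /\
    is_lim (fun x => f x / phi x) p_infty 1.

Definition continuous_within (D : R -> Prop) (g : R -> R) (x : R) : Prop :=
  filterlim g (within D (locally x)) (locally (g x)).

(* Since f > 0, z is nondecreasing for t > delta, and f(z) is bounded below
   there, so z' is bounded below by a positive constant and z -> oo.  By
   superlinearity of f, z' on [t - delta/2, t] is then an arbitrarily large
   multiple of z(t - delta), so z(t) / z(t - delta) -> oo.  Finally f is
   comparable to the increasing phi for large arguments, whence
   |Fbar a| = O(a phi(a)) while Fbar b - Fbar a >= (b - a) phi(a) / 2; with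
   a = z(t - delta), b = z(t) and b / a -> oo the ratio tends to 0. *)

From Stdlib Require Import Reals Lra.
From Coquelicot Require Import Coquelicot.
Open Scope R_scope.

Lemma is_lim_p_infty_gt (g : R -> R) (K : R) :
  is_lim g p_infty p_infty -> exists M, forall x, M < x -> K < g x.
Proof. intros Hg. apply (Hg (fun y => K < y)). now exists K. Qed.

Lemma is_lim_p_infty_shift (g : R -> R) (d : R) (l : Rbar) :
  is_lim g p_infty l -> is_lim (fun t => g (t - d)) p_infty l.
Proof.
  intros Hg P HP. destruct (Hg P HP) as [M HM].
  exists (M + d). intros t Ht. apply HM; lra.
Qed.

Lemma ex_RInt_continuous_le (g : R -> R) (a b : R) : a <= b ->
  (forall x, a <= x <= b -> continuous g x) -> ex_RInt g a b.
Proof.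
  intros Hab Hg. apply (ex_RInt_continuous (V := R_CompleteNormedModule)).
  intros x Hx. rewrite Rmin_left, Rmax_right in Hx by lra. now apply Hg.
Qed.

Lemma RInt_ge_const (g : R -> R) (a b c : R) : a <= b -> ex_RInt g a b ->
  (forall x, a < x < b -> c <= g x) -> c * (b - a) <= RInt g a b.
Proof.
  intros Hab Hg Hc. rewrite Rmult_comm, <- (RInt_const (V := R_CompleteNormedModule)).
  apply RInt_le; auto. apply ex_RInt_const.
Qed.

Lemma RInt_le_const (g : R -> R) (a b c : R) : a <= b -> ex_RInt g a b ->
  (forall x, a < x < b -> g x <= c) -> RInt g a b <= c * (b - a).
Proof.
  intros Hab Hg Hc. rewrite Rmult_comm, <- (RInt_const (V := R_CompleteNormedModule)).
  apply RInt_le; auto. apply ex_RInt_const.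
Qed.

Lemma RInt_le_RInt_superinterval (g : R -> R) (a b c d : R) :
  a <= b -> b <= c -> c <= d ->
  (forall x, a <= x <= d -> continuous g x) ->
  (forall x, a <= x <= d -> 0 <= g x) ->
  RInt g b c <= RInt g a d.
Proof.
  intros Hab Hbc Hcd Hg Hpos.
  assert (Hint : forall u v, a <= u -> u <= v -> v <= d -> ex_RInt g u v).
  { intros u v Hu Huv Hv. apply ex_RInt_continuous_le; auto.
    intros x Hx; apply Hg; lra. }
  assert (Hnonneg : forall u v, a <= u -> u <= v -> v <= d -> 0 <= RInt g u v).
  { intros u v Hu Huv Hv. apply RInt_ge_0; auto.
    intros x Hx; apply Hpos; lra. }
  rewrite <- (RInt_Chasles g a b d), <- (RInt_Chasles g b c d) by (apply Hint; lra).
  assert (0 <= RInt g a b) by (apply Hnonneg; lra).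
  assert (0 <= RInt g c d) by (apply Hnonneg; lra).
  unfold plus; simpl; lra.
Qed.

Lemma increment_ge_of_derive_ge (g dg : R -> R) (a b c : R) : a <= b ->
  (forall x, a <= x <= b -> is_derive g x (dg x)) ->
  (forall x, a <= x <= b -> c <= dg x) -> c * (b - a) <= g b - g a.
Proof.
  intros Hab Hd Hc.
  destruct (MVT_gen g a b dg) as [x [Hx ->]];
    rewrite ?Rmin_left, ?Rmax_right in * by lra.
  - intros x Hx. apply Hd; lra.
  - intros x Hx. apply continuity_pt_filterlim, (ex_derive_continuous (V := R_NormedModule)).
    exists (dg x). now apply Hd.
  - apply Rmult_le_compat_r; [lra | now apply Hc].
Qed.

Lemma is_lim_p_infty_of_derive_ge (g dg : R -> R) (t0 c : R) : 0 < c ->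
  (forall t, t0 <= t -> is_derive g t (dg t)) ->
  (forall t, t0 <= t -> c <= dg t) -> is_lim g p_infty p_infty.
Proof.
  intros Hc Hd Hdc P [L HL]. exists (t0 + Rabs (L - g t0) / c). intros t Ht.
  apply HL.
  assert (Hlin : c * (t - t0) <= g t - g t0).
  { assert (0 <= Rabs (L - g t0) / c) by (apply Rdiv_le_0_compat; [apply Rabs_pos | lra]).
    apply (increment_ge_of_derive_ge g dg); try lra;
      intros x Hx; [apply Hd | apply Hdc]; lra. }
  assert (Habs : L - g t0 < c * (t - t0)).
  { apply Rle_lt_trans with (Rabs (L - g t0)); [apply Rle_abs |].
    apply (Rmult_lt_compat_l c) in Ht; [| lra].
    replace (c * (t0 + Rabs (L - g t0) / c)) with (c * t0 + Rabs (L - g t0)) in Ht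
      by (field; lra).
    lra. }
  lra.
Qed.

Lemma Rabs_div_lt (x y P eps : R) : 0 < eps -> Rabs x <= P ->
  (1 + / eps) * P < y - x -> Rabs (x / y) < eps.
Proof.
  intros Heps Hx Hy.
  assert (HP : 0 <= P) by (eapply Rle_trans; [apply Rabs_pos | exact Hx]).
  assert (Hxy : Rabs x < eps * y).
  { assert (Hmul : eps * ((1 + / eps) * P + x) < eps * y)
      by (apply Rmult_lt_compat_l; lra).
    replace (eps * ((1 + / eps) * P + x)) with (eps * (P + x) + P) in Hmul
      by (field; lra).
    assert (0 <= eps * (P + x))
      by (apply Rmult_le_pos; [lra | apply Rabs_le_between in Hx; lra]).
    lra. }
  assert (Hy0 : 0 < y).
  { apply (Rmult_lt_reg_l eps); [lra |].
    rewrite Rmult_0_r. pose proof (Rabs_pos x). lra. }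
  rewrite Rabs_div, (Rabs_pos_eq y) by lra.
  apply Rlt_div_l; lra.
Qed.

Section Primitive.

Variables f Fbar phi : R -> R.
Hypothesis f_cont : forall x, 0 < x -> continuous f x.
Hypothesis Fbar_primitive :
  forall x, 0 < x -> is_RInt_gen f (at_right 0) (at_point x) (Fbar x).
Hypothesis phi_pos : forall x, 0 < x -> 0 < phi x.
Hypothesis phi_incr : forall x y, 0 < x -> x < y -> phi x < phi y.
Hypothesis f_phi : is_lim (fun x => f x / phi x) p_infty 1.

Lemma primitive_Chasles a b : 0 < a -> a <= b -> Fbar b = Fbar a + RInt f a b.
Proof.
  intros Ha Hab.
  assert (Hint : ex_RInt f a b)
    by (apply ex_RInt_continuous_le; auto; intros x Hx; apply f_cont; lra).
  transitivity (RInt_gen f (at_right 0) (at_point b));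
    [symmetry |]; apply (is_RInt_gen_unique (V := R_CompleteNormedModule)).
  - apply Fbar_primitive; lra.
  - apply (is_RInt_gen_Chasles f a); auto.
    apply is_RInt_gen_at_point, (RInt_correct (V := R_CompleteNormedModule)), Hint.
Qed.

Lemma f_phi_bounds :
  exists M, 0 < M /\ forall x, M < x -> phi x / 2 <= f x <= 3 * phi x / 2.
Proof.
  destruct (f_phi (fun y => Rabs (y - 1) < 1 / 2)) as [M0 HM0].
  { exists (mkposreal (1 / 2) ltac:(lra)). now intros y Hy. }
  exists (Rmax M0 1). split; [pose proof (Rmax_r M0 1); lra |].
  intros x Hx. pose proof (Rmax_l M0 1). pose proof (Rmax_r M0 1).
  assert (Hphi : 0 < phi x) by (apply phi_pos; lra).
  assert (Hratio := HM0 x ltac:(lra)). apply Rabs_def2 in Hratio.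
  assert (f x = f x / phi x * phi x) by (field; lra).
  split; nra.
Qed.

Section AboveM.

Variable M : R.
Hypothesis M_pos : 0 < M.
Hypothesis f_phi_M : forall x, M < x -> phi x / 2 <= f x <= 3 * phi x / 2.

Lemma primitive_increment_ge a b : M < a -> a <= b ->
  phi a / 2 * (b - a) <= Fbar b - Fbar a.
Proof.
  intros Ha Hab. rewrite (primitive_Chasles a b) by lra.
  enough (phi a / 2 * (b - a) <= RInt f a b) by (simpl in *; lra).
  apply RInt_ge_const; auto.
  - apply ex_RInt_continuous_le; auto. intros x Hx; apply f_cont; lra.
  - intros x Hx. assert (phi a < phi x) by (apply phi_incr; lra).
    pose proof (f_phi_M x ltac:(lra)). lra.
Qed.

Lemma primitive_abs_le a : M < a ->
  Rabs (Fbar a) <= Rabs (Fbar M) + 3 * phi a / 2 * a.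
Proof.
  intros Ha. rewrite (primitive_Chasles M a) by lra.
  assert (Hint : ex_RInt f M a)
    by (apply ex_RInt_continuous_le; try lra; intros x Hx; apply f_cont; lra).
  assert (HphiM : 0 < phi M) by (apply phi_pos; lra).
  assert (HI0 : 0 <= RInt f M a).
  { apply RInt_ge_0; try lra; auto. intros x Hx.
    assert (phi M < phi x) by (apply phi_incr; lra).
    pose proof (f_phi_M x ltac:(lra)). lra. }
  assert (HI : RInt f M a <= 3 * phi a / 2 * (a - M)).
  { apply RInt_le_const; try lra; auto. intros x Hx.
    assert (phi x < phi a) by (apply phi_incr; lra).
    pose proof (f_phi_M x ltac:(lra)). lra. }
  assert (0 < phi a) by (apply phi_pos; lra).
  eapply Rle_trans; [apply Rabs_triang |]. rewrite (Rabs_pos_eq (RInt f M a)) by lra.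
  nra.
Qed.

End AboveM.

Lemma primitive_ratio_lim (u v : R -> R) :
  is_lim u p_infty p_infty -> is_lim (fun t => v t / u t) p_infty p_infty ->
  is_lim (fun t => Fbar (u t) / Fbar (v t)) p_infty 0.
Proof.
  intros Hu Hvu P [eps HP].
  destruct f_phi_bounds as [M [HM Hbounds]].
  assert (HphiM : 0 < phi M) by (apply phi_pos; lra).
  destruct (is_lim_p_infty_gt u (Rmax M (2 * Rabs (Fbar M) / phi M)) Hu) as [T1 HT1].
  destruct (is_lim_p_infty_gt _ (4 * (1 + / eps) + 1) Hvu) as [T2 HT2].
  exists (Rmax T1 T2). intros t Ht. apply HP.
  change (Rabs (Fbar (u t) / Fbar (v t) - 0) < eps). rewrite Rminus_0_r.
  specialize (HT1 t ltac:(pose proof (Rmax_l T1 T2); lra)).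
  specialize (HT2 t ltac:(pose proof (Rmax_r T1 T2); lra)).
  set (a := u t) in *; set (b := v t) in *.
  assert (HaM : M < a) by (pose proof (Rmax_l M (2 * Rabs (Fbar M) / phi M)); lra).
  assert (HaF : 2 * Rabs (Fbar M) / phi M < a)
    by (pose proof (Rmax_r M (2 * Rabs (Fbar M) / phi M)); lra).
  assert (Hphia : phi M < phi a) by (apply phi_incr; lra).
  assert (Heps : 0 < / eps) by (apply Rinv_0_lt_compat, cond_pos).
  assert (Hb : 4 * (1 + / eps) * a < b - a).
  { apply (Rmult_lt_compat_r a) in HT2; [| lra].
    unfold Rdiv in HT2. rewrite Rmult_assoc, Rinv_l, Rmult_1_r in HT2 by lra. lra. }
  apply (Rabs_div_lt _ _ (2 * phi a * a)); [apply cond_pos | |].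
  - assert (HFM : Rabs (Fbar M) <= phi M / 2 * a).
    { apply (Rmult_lt_compat_r (phi M)) in HaF; [| lra].
      unfold Rdiv in HaF. rewrite Rmult_assoc, Rinv_l, Rmult_1_r in HaF by lra. lra. }
    pose proof (primitive_abs_le M HM Hbounds a ltac:(lra)). nra.
  - assert (0 < phi a) by (apply phi_pos; lra).
    assert (0 <= 4 * (1 + / eps) * a) by (apply Rmult_le_pos; lra).
    pose proof (primitive_increment_ge M HM Hbounds a b ltac:(lra) ltac:(lra)).
    apply (Rmult_lt_compat_l (phi a / 2)) in Hb; lra.
Qed.

End Primitive.

Section DelayEquation.

Variables (C delta : R) (f z : R -> R).
Hypothesis C_pos : 0 < C.
Hypothesis delta_pos : 0 < delta.
Hypothesis f_cont : forall x, 0 < x -> continuous f x.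
Hypothesis f_pos : forall x, 0 < x -> 0 < f x.
Hypothesis f_superlinear : is_lim (fun x => f x / x) p_infty p_infty.
Hypothesis z_pos : forall t, 0 < t -> 0 < z t.
Hypothesis z_derive :
  forall t, 0 < t -> is_derive z t (C * RInt (fun s => f (z s)) (t - delta) t).

Lemma fz_continuous t : 0 < t -> continuous (fun s => f (z s)) t.
Proof.
  intros Ht. apply continuous_comp; [| now apply f_cont, z_pos].
  apply (ex_derive_continuous (V := R_NormedModule)). eexists. now apply z_derive.
Qed.

Lemma fz_ex_RInt a b : 0 < a -> a <= b -> ex_RInt (fun s => f (z s)) a b.
Proof.
  intros Ha Hab. apply ex_RInt_continuous_le; auto.
  intros x Hx. apply fz_continuous; lra.
Qed.

Lemma z_nondecreasing a b : delta < a -> a <= b -> z a <= z b.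
Proof.
  intros Ha Hab.
  enough (0 * (b - a) <= z b - z a) by lra.
  apply (increment_ge_of_derive_ge z (fun t => C * RInt (fun s => f (z s)) (t - delta) t));
    auto; intros x Hx; [apply z_derive; lra |].
  apply Rmult_le_pos; [lra |]. apply RInt_ge_0; [lra | apply fz_ex_RInt; lra |].
  intros s Hs. apply Rlt_le, f_pos, z_pos. lra.
Qed.

Lemma f_bounded_below a : 0 < a -> exists m, 0 < m /\ forall x, a <= x -> m <= f x.
Proof.
  intros Ha. destruct (is_lim_p_infty_gt _ 1 f_superlinear) as [N HN].
  destruct (continuity_ab_min f a (Rmax a N)) as [xmin [Hxmin Hrange]];
    [apply Rmax_l | intros x Hx; apply continuity_pt_filterlim, f_cont; lra |].
  assert (Hfmin : 0 < f xmin) by (apply f_pos; lra).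
  exists (Rmin (f xmin) a). split; [now apply Rmin_glb_lt |]. intros x Hx.
  destruct (Rle_or_lt x (Rmax a N)) as [Hle | Hgt].
  - eapply Rle_trans; [apply Rmin_l | apply Hxmin; lra].
  - assert (HxN : N < x) by (pose proof (Rmax_r a N); lra).
    specialize (HN x HxN). apply Rlt_div_r in HN; [| lra].
    pose proof (Rmin_r (f xmin) a). lra.
Qed.

Lemma z_tends_to_infinity : is_lim z p_infty p_infty.
Proof.
  assert (Hz0 : 0 < z (2 * delta)) by (apply z_pos; lra).
  destruct (f_bounded_below _ Hz0) as [m [Hm Hfm]].
  apply (is_lim_p_infty_of_derive_ge z (fun t => C * RInt (fun s => f (z s)) (t - delta) t)
           (3 * delta) (C * (m * delta))).
  - apply Rmult_lt_0_compat; nra.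
  - intros t Ht. apply z_derive; lra.
  - intros t Ht. apply Rmult_le_compat_l; [lra |].
    replace delta with (t - (t - delta)) at 1 by ring.
    apply RInt_ge_const; [lra | apply fz_ex_RInt; lra |].
    intros s Hs. apply Hfm, z_nondecreasing; lra.
Qed.

(* For s in [t - delta/2, t], the delay window [s - delta, s] contains
   [t - delta, t - delta/2]. *)
Lemma z_increment_ge t c : 2 * delta < t ->
  (forall u, t - delta <= u <= t - delta / 2 -> c <= f (z u)) ->
  z (t - delta) + C * (c * (delta / 2)) * (delta / 2) <= z t.
Proof.
  intros Ht Hc.
  assert (Hwindow : forall s, t - delta / 2 <= s <= t ->
            c * (delta / 2) <= RInt (fun u => f (z u)) (s - delta) s).
  { intros s Hs.
    apply Rle_trans with (RInt (fun u => f (z u)) (t - delta) (t - delta / 2)).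
    - replace (c * (delta / 2)) with (c * (t - delta / 2 - (t - delta))) by (f_equal; field).
      apply RInt_ge_const; [lra | apply fz_ex_RInt; lra |].
      intros u Hu; apply Hc; lra.
    - apply RInt_le_RInt_superinterval; try lra.
      + intros u Hu; apply fz_continuous; lra.
      + intros u Hu; apply Rlt_le, f_pos, z_pos; lra. }
  assert (Hgrowth : C * (c * (delta / 2)) * (t - (t - delta / 2)) <= z t - z (t - delta / 2)).
  { apply (increment_ge_of_derive_ge z (fun t => C * RInt (fun s => f (z s)) (t - delta) t));
      [lra | intros x Hx; apply z_derive; lra |].
    intros x Hx. apply Rmult_le_compat_l; [lra | now apply Hwindow]. }
  assert (z (t - delta) <= z (t - delta / 2)) by (apply z_nondecreasing; lra).
  replace (t - (t - delta / 2)) with (delta / 2) in Hgrowth by ring.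
  lra.
Qed.

Lemma z_ratio_tends_to_infinity : is_lim (fun t => z t / z (t - delta)) p_infty p_infty.
Proof.
  intros P [K HK].
  set (k := 4 * Rabs K / (C * delta ^ 2)).
  assert (Hk : 0 <= k)
    by (apply Rdiv_le_0_compat; [pose proof (Rabs_pos K); lra |
                                 apply Rmult_lt_0_compat, pow_lt; lra]).
  destruct (is_lim_p_infty_gt _ k f_superlinear) as [N HN].
  destruct (is_lim_p_infty_gt z N z_tends_to_infinity) as [T HT].
  exists (Rmax (T + delta) (2 * delta)). intros t Ht. apply HK.
  pose proof (Rmax_l (T + delta) (2 * delta)). pose proof (Rmax_r (T + delta) (2 * delta)).
  set (a := z (t - delta)).
  assert (Ha : 0 < a) by (apply z_pos; lra).
  assert (Hbound : forall u, t - delta <= u <= t - delta / 2 -> k * a <= f (z u)).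
  { intros u Hu.
    assert (Hzu : 0 < z u) by (apply z_pos; lra).
    assert (Hfzu := HN (z u) (HT u ltac:(lra))). apply Rlt_div_r in Hfzu; [| lra].
    assert (Hau : a <= z u) by (apply z_nondecreasing; lra).
    apply Rmult_le_compat_l with (r := k) in Hau; lra. }
  assert (Hzt := z_increment_ge t (k * a) ltac:(lra) Hbound). fold a in Hzt.
  replace (C * (k * a * (delta / 2)) * (delta / 2)) with (Rabs K * a) in Hzt
    by (unfold k; field; lra).
  apply Rlt_div_r; [lra |].
  assert (K * a <= Rabs K * a) by (apply Rmult_le_compat_r; [lra | apply Rle_abs]).
  lra.
Qed.

End DelayEquation.

Theorem lemma6p2 (C delta : R) (f psi z Fbar : R -> R) :
  0 < C -> 0 < delta ->
  (* f in C((0,oo);(0,oo)) *)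
  (forall x, 0 < x -> continuous f x) ->
  (forall x, 0 < x -> 0 < f x) ->
  asymptotically_increasing f ->
  is_lim (fun x => f x / x) p_infty p_infty ->
  (* psi in C([-delta,0];(0,oo)) *)
  (forall t, -delta <= t <= 0 ->
     continuous_within (fun s => -delta <= s <= 0) psi t) ->
  (forall t, -delta <= t <= 0 -> 0 < psi t) ->
  (* z in C([-delta,oo);(0,oo)) solves the delay equation *)
  (forall t, -delta <= t ->
     continuous_within (fun s => -delta <= s) z t) ->
  (forall t, -delta <= t -> 0 < z t) ->
  (forall t, -delta <= t <= 0 -> z t = psi t) ->
  (forall t, 0 < t ->
     is_derive z t (C * RInt (fun s => f (z s)) (t - delta) t)) ->
  (* at t = 0: right derivative *)
  filterlim (fun h => (z h - z 0) / h) (at_right 0)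
    (locally (C * RInt (fun s => f (z s)) (0 - delta) 0)) ->
  (* Fbar x = int_0^x f(s) ds  (improper at 0, assumed finite) *)
  (forall x, 0 < x -> is_RInt_gen f (at_right 0) (at_point x) (Fbar x)) ->
  is_lim (fun t => Fbar (z (t - delta)) / Fbar (z t)) p_infty 0.
Proof.
  intros HC Hdelta Hf_cont Hf_pos [phi [_ [Hphi_pos [Hphi_incr Hf_phi]]]] Hf_superlinear
    _ _ _ Hz_pos _ Hz_derive _ HFbar.
  assert (Hz_pos' : forall t, 0 < t -> 0 < z t) by (intros t Ht; apply Hz_pos; lra).
  apply (primitive_ratio_lim f Fbar phi); auto.
  - apply is_lim_p_infty_shift, (z_tends_to_infinity C delta f z); auto.
  - apply (z_ratio_tends_to_infinity C delta f z); auto.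
Qed.
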